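(* Let $g\ge 2$ be an integer, let $\alpha_1,\dots,\alpha_{2g-1},\alpha$ be mutually distinct complex numbers, put $F_0(z)=\big(\prod_{j=1}^{2g-1}(1-\alpha_j z^2)\big)^{1/2}\in\mathbb{C}[[z]]$ (the branch with $F_0(0)=1$), and let $y_0\in\mathbb{C}$ satisfy $y_0^2=\prod_{j=1}^{2g-1}(\alpha-\alpha_j)$ (so $y_0\neq 0$). Let $X$ be the frame whose $k$-th column is the Laurent series $f_k$, where $f_1=\dfrac{z^g}{1-\alpha z^2}$, $f_k=z^{g-2(k-1)}$ for $2\le k\le g$, $f_{g+2i+1}=z^{-g-2i}$ and $f_{g+2i+2}=z^{-g-2i-1}F_0(z)$ for $i\ge 0$; and for $\epsilon\in\{+,-\}$ let $Y^\epsilon$ be the frame whose $k$-th column is $h^\epsilon_k$, where $h^\epsilon_k=z^{g-2k}$ for $1\le k\le g-1$, $h^\epsilon_g=z^{-g+1}\dfrac{F_0(z)+\epsilon\, y_0 z^{2g-1}}{1-\alpha z^2}$, $h^\epsilon_{g+2i+1}=z^{-g-2i}$ and $h^\epsilon_{g+2i+2}=z^{-g-1-2i}F_0(z)$ for $i\ge 0$. Then, as formal power series in $t=(t_1,t_2,\dots)$, $$\tau(t;X)=(-1)^{g-1}(2y_0)^{-1}\big(\tau(t;Y^+)-\tau(t;Y^-)\big).$$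
   Context: Laurent series in $z$ are identified with coefficient column vectors via the basis $e_i=z^{i+1}$, $i\in\mathbb{Z}$: a series $\sum_i \xi_i e_i$ is the column $(\xi_i)_{i\in\mathbb{Z}}$. A frame $\xi=[\dots,\upsilon_3,\upsilon_2,\upsilon_1]$ is thus a $\mathbb{Z}\times\mathbb{N}$ matrix $(\xi_{i,j})$ whose $j$-th column is $\upsilon_j$; the frames above satisfy $\upsilon_j=e_{-j}+\sum_{i>-j}\xi_{i,j}e_i$ for all large $j$, so the infinite determinants below are well defined. For a partition $\lambda=(\lambda_1,\lambda_2,\dots)$ (padded with zeros) let $m_i=\lambda_i-i$ and define the Plücker coordinate $\xi_\lambda=\det(\xi_{m_i,j})_{i,j\in\mathbb{N}}$. Schur functions: $\exp(\sum_{i\ge1}t_ik^i)=\sum_{i\ge0}s_{(i)}(t)k^i$, and $s_\lambda(t)=\det(s_{(\lambda_i-i+j)}(t))_{1\le i,j\le l}$ for $\lambda=(\lambda_1,\dots,\lambda_l)$ (with $s_{(n)}=0$ for $n<0$). The tau function of a frame $\xi$ is $\tau(t;\xi)=\sum_\lambda \xi_\lambda s_\lambda(t)$, the sum over all partitions. *)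

From HB Require Import structures.
From mathcomp Require Import all_boot all_order all_algebra.
From mathcomp Require Import mpoly.
From Stdlib Require Import ClassicalEpsilon.

Set Implicit Arguments.
Unset Strict Implicit.
Unset Printing Implicit Defensive.

Import Order.TTheory GRing.Theory Num.Theory.
Local Open Scope ring_scope.

Section TauDefs.
Variable C : numClosedFieldType.

Definition ps := nat -> C.
Definition psadd (a b : ps) : ps := fun n => a n + b n.
Definition psscale (c : C) (a : ps) : ps := fun n => c * a n.
Definition psmul (a b : ps) : ps := fun n => \sum_(k < n.+1) a k * b (n - k)%N.
Definition psX (a : nat) : ps := fun n => (n == a)%:R.
Definition ps_1mz2 (a : C) : ps := fun n => (n == 0%N)%:R - a * (n == 2%N)%:R.
(* 1/(1 - a z^2) = sum_k a^k z^(2k) *)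
Definition ps_geom2 (a : C) : ps := fun n => if odd n then 0 else a ^+ n./2.
Definition ps_prod1mz2 (s : seq C) : ps :=
  foldr (fun a p => psmul (ps_1mz2 a) p) (psX 0) s.
Definition is_sqrt1 (P F : ps) : Prop := F 0%N = 1 /\ (forall n, psmul F F n = P n).
Definition ps_sqrt1 (P : ps) : ps :=
  epsilon (inhabits (fun _ : nat => 0 : C)) (is_sqrt1 P).

Definition ls := int -> C.
(* z^a * p(z) *)
Definition lshift (a : int) (p : ps) : ls :=
  fun n => match (n - a)%R with Posz k => p k | Negz _ => 0 end.

(* xi i j = xi_{i,j} = coefficient of e_i = z^(i+1) in the j-th column v_j
   (columns are indexed by j >= 1; the value at j = 0 is unused). *)
Definition frame := int -> nat -> C.
Definition frame_of_cols (f : nat -> ls) : frame := fun i j => f j (i + 1)%R.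

Definition part_m (la : seq nat) (i : nat) : int := (nth 0%N la i.-1)%:Z - i%:Z.

Definition pl_minor (xi : frame) (la : seq nat) (M : nat) : C :=
  \det (\matrix_(i < M, j < M) xi (part_m la i.+1) j.+1).

(* Pluecker coordinate: the infinite determinant det(xi_{m_i,j})_{i,j in N},
   i.e. the eventual (stable) value of its leading principal truncations. *)
Definition plucker (xi : frame) (la : seq nat) : C :=
  epsilon (inhabits 0)
    (fun c => exists M0, forall M, (M0 <= M)%N -> pl_minor xi la M = c).

(* ---------- Schur functions, restricted to t_1..t_N (t_k = 0 for k > N) ------ *)
(* variable 'X_i (i : 'I_N) stands for t_{i+1} *)
Definition mweight N (m : 'X_{1..N}) : nat := (\sum_(i < N) i.+1 * m i)%N.
Definition mfact N (m : 'X_{1..N}) : C := \prod_(i < N) ((m i)`!)%:R.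

(* s_(n)(t): coefficient of k^n in exp(sum_i t_i k^i) = prod_i sum_m t_i^m k^(i m)/m! *)
Definition schur1 N (n : int) : {mpoly C[N]} :=
  match n with
  | Posz k => \sum_(m : 'X_{1..N < k.+1} | mweight m == k) (mfact m)^-1 *: 'X_[m]
  | Negz _ => 0
  end.

Definition is_partition (la : seq nat) : bool := sorted geq la && all (fun x => 0 < x)%N la.

Definition schur N (la : seq nat) : {mpoly C[N]} :=
  \det (\matrix_(i < size la, j < size la)
          schur1 N ((nth 0%N la i)%:Z - i%:Z + j%:Z)).

Definition fsum (T : eqType) (f : T -> C) : C :=
  epsilon (inhabits 0) (fun c => exists s : seq T,
     [/\ uniq s, (forall x, f x != 0 -> x \in s) & c = \sum_(x <- s) f x]).

(* coefficient of the monomial t^m (m involving only t_1..t_N) in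
   tau(t; xi) = sum_lambda xi_lambda s_lambda(t) *)
Definition tau (xi : frame) N (m : 'X_{1..N}) : C :=
  fsum (fun la : seq nat =>
          if is_partition la then plucker xi la * (schur N la)@_m else 0).

Definition F0 (alphas : seq C) : ps := ps_sqrt1 (ps_prod1mz2 alphas).

(* columns k >= g+1 common to X and Y^eps:
   f_{g+2i+1} = z^{-g-2i},  f_{g+2i+2} = z^{-g-2i-1} F0 *)
Definition tail_col (alphas : seq C) (g k : nat) : ls :=
  let r := (k - g - 1)%N in
  let i := r./2 in
  if odd r then lshift (- (g + 2 * i + 1)%N%:Z) (F0 alphas)
  else lshift (- (g + 2 * i)%N%:Z) (psX 0).

Definition colX (alphas : seq C) (alpha : C) (g k : nat) : ls :=
  if k == 1%N then lshift g%:Z (ps_geom2 alpha)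
  else if (k <= g)%N then lshift (g%:Z - 2 * (k%:Z - 1)) (psX 0)
  else tail_col alphas g k.

Definition frameX alphas alpha g : frame := frame_of_cols (colX alphas alpha g).

(* eps = true for +, false for - *)
Definition colY (alphas : seq C) (alpha y0 : C) (g : nat) (eps : bool) (k : nat) : ls :=
  if (k <= g - 1)%N then lshift (g%:Z - 2 * k%:Z) (psX 0)
  else if k == g then
    lshift (1 - g%:Z)
      (psmul (psadd (F0 alphas)
                    (psscale ((if eps then 1 else -1) * y0) (psX (2 * g - 1))))
             (ps_geom2 alpha))
  else tail_col alphas g k.

Definition frameY alphas alpha y0 g eps : frame :=
  frame_of_cols (colY alphas alpha y0 g eps).

End TauDefs.

(* Since z^(1-g) z^(2g-1) / (1 - alpha z^2) = f_1, the g-th column of Y^+- is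
   u +- y_0 f_1 for a common u, while all other columns of Y^+ and Y^- agree and
   equal those of W below; so by multilinearity every truncated minor satisfies
   det Y^+ - det Y^- = 2 y_0 det W, where W is X with its first column moved to
   position g; this cyclic shift of g columns has sign (-1)^(g-1).  Beyond column g
   the columns of Y^+- are z^(1-j) (1 + O(z)) (because F_0(0) = 1), so their truncated
   minors are eventually constant and equal the Plücker coordinates.  Finally, tau is
   linear in the Plücker coordinates: Schur functions are weighted homogeneous, so
   only finitely many partitions contribute to the coefficient of a given monomial. *)

From Pilot Require Import Defs.
From HB Require Import structures.
From mathcomp Require Import all_boot all_order all_algebra perm.
From mathcomp Require Import mpoly.
From mathcomp Require Import zify ring.
From Stdlib Require Import ClassicalEpsilon.
Set Implicit Arguments.
Unset Strict Implicit.
Unset Printing Implicit Defensive.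

Import Order.TTheory GRing.Theory Num.Theory.
Local Open Scope ring_scope.

Section PowerSeries.
Variable C : numClosedFieldType.
Implicit Types (p q r : ps C) (P : ps C).

Lemma psmul0 p q : psmul p q 0 = p 0%N * q 0%N.
Proof. by rewrite /psmul big_ord1. Qed.

Lemma psmulDl p q r n : psmul (psadd p q) r n = psmul p r n + psmul q r n.
Proof. by rewrite /psmul -big_split; apply: eq_bigr => i _; rewrite mulrDl. Qed.

Lemma psmulZl c p q n : psmul (psscale c p) q n = c * psmul p q n.
Proof. by rewrite /psmul mulr_sumr; apply: eq_bigr => i _; rewrite mulrA. Qed.

Lemma psmulXl k q n : psmul (psX C k) q n = if (k <= n)%N then q (n - k)%N else 0.
Proof.
rewrite /psmul (eq_bigr (fun i : 'I_n.+1 => if i == k :> nat then q (n - k)%N else 0)).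
  by rewrite -big_mkcond (big_ord1_eq _ (fun _ => q (n - k)%N)) ltnS.
by move=> i _; rewrite /psX; case: eqP => [->|_]; rewrite ?mul1r ?mul0r.
Qed.

Lemma lshiftE a p n : Defs.lshift a p n = if a <= n then p `|n - a|%N else 0.
Proof. by rewrite /Defs.lshift; case E: (n - a) => [k|k]; case: ifP => //; lia. Qed.

Lemma lshift_psmul_linear a p q r c n :
  Defs.lshift a (psmul (psadd p (psscale c q)) r) n =
  Defs.lshift a (psmul p r) n + c * Defs.lshift a (psmul q r) n.
Proof.
by rewrite /Defs.lshift; case: (n - a) => k; rewrite ?psmulDl ?psmulZl ?mulr0 ?addr0.
Qed.

Lemma lshift_psmulXl a k r n :
  Defs.lshift a (psmul (psX C k) r) n = Defs.lshift (a + k%:Z) r n.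
Proof.
rewrite !lshiftE psmulXl; do ![case: ifP => ?] => //; try (exfalso; lia).
by congr r; lia.
Qed.

(* With [F 0 = 1], the coefficient of [z^n] in [F * F] is
   [2 F_n + \sum_(0 < k < n) F_k F_(n-k)], which determines [F_n]. *)
Fixpoint sqrt1_coefs P n : seq C :=
  if n is n'.+1 then
    let s := sqrt1_coefs P n' in
    rcons s ((P n - \sum_(1 <= k < n) s`_k * s`_(n - k)) / 2)
  else [:: 1].

Definition sqrt1_coef P n := (sqrt1_coefs P n)`_n.

Lemma size_sqrt1_coefs P n : size (sqrt1_coefs P n) = n.+1.
Proof. by elim: n => //= n IH; rewrite size_rcons IH. Qed.

Lemma nth_sqrt1_coefs P k n : (k <= n)%N -> (sqrt1_coefs P n)`_k = sqrt1_coef P k.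
Proof.
elim: n => [|n IH]; first by rewrite leqn0 => /eqP ->.
rewrite leq_eqVlt => /orP [/eqP -> //| lt_kn].
by rewrite /= nth_rcons size_sqrt1_coefs lt_kn IH.
Qed.

Lemma sqrt1_coefS P n : sqrt1_coef P n.+1 =
  (P n.+1 - \sum_(1 <= k < n.+1) sqrt1_coef P k * sqrt1_coef P (n.+1 - k)) / 2.
Proof.
rewrite {1}/sqrt1_coef /= nth_rcons size_sqrt1_coefs ltnn eqxx.
apply: (congr1 (fun S => (P n.+1 - S) / 2)); apply: eq_big_nat => k /andP [k1 kn].
by rewrite !nth_sqrt1_coefs // leq_subLR; lia.
Qed.

Lemma sqrt1_coefP P : P 0%N = 1 -> is_sqrt1 P (sqrt1_coef P).
Proof.
move=> P0; split=> [//|[|n]]; first by rewrite psmul0 /sqrt1_coef /= mul1r.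
rewrite /psmul big_ord_recl big_ord_recr /= subn0 subnn sqrt1_coefS.
rewrite big_add1 /= big_mkord; set S := \sum_(i < n) _.
have two_neq0 : (2 : C) != 0 by rewrite pnatr_eq0.
by rewrite [sqrt1_coef P 0]/sqrt1_coef /=; field.
Qed.

Lemma ps_sqrt1_0 P : P 0%N = 1 -> ps_sqrt1 P 0 = 1.
Proof.
move=> P0; have [] // := epsilon_spec (inhabits (fun _ : nat => 0 : C)) (is_sqrt1 P).
by exists (sqrt1_coef P); exact: sqrt1_coefP.
Qed.

Lemma ps_prod1mz2_0 (s : seq C) : ps_prod1mz2 s 0%N = 1.
Proof. by elim: s => //= a s IH; rewrite psmul0 IH /ps_1mz2 /= mulr0 subr0 mulr1. Qed.

Lemma F0_0 (s : seq C) : F0 s 0%N = 1.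
Proof. exact/ps_sqrt1_0/ps_prod1mz2_0. Qed.

End PowerSeries.

Section Minors.
Variable C : numClosedFieldType.
Implicit Types (xi eta zeta : frame C) (la : seq nat).

Definition frame_perm xi (p : nat -> nat) : frame C := fun i j => xi i (p j).

Definition swapn (s j : nat) : nat := if j == s then s.+1 else if j == s.+1 then s else j.

Definition rotn (s j : nat) : nat := if (j < s)%N then j.+1 else if j == s then 1%N else j.

Lemma rotnS s j : rotn s.+1 j = rotn s (swapn s j).
Proof. rewrite /rotn /swapn; do ![case: ifP]; lia. Qed.

Lemma pl_minor_ext xi eta la M :
  (forall i j, (0 < j <= M)%N -> xi i j = eta i j) -> pl_minor xi la M = pl_minor eta la M.
Proof. by move=> E; congr (\det _); apply/matrixP => i j; rewrite !mxE E // ltn_ord. Qed.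

Lemma pl_minor_linear xi eta zeta la M J a b :
  (0 < J <= M)%N ->
  (forall i, xi i J = a * eta i J + b * zeta i J) ->
  (forall i j, (0 < j)%N -> j != J -> eta i j = xi i j /\ zeta i j = xi i j) ->
  pl_minor xi la M = a * pl_minor eta la M + b * pl_minor zeta la M.
Proof.
move=> /andP [J_gt0 J_le] xiJ off_J.
have J'_lt : (J.-1 < M)%N by rewrite prednK.
have lift_neq k : (lift (Ordinal J'_lt) k).+1 != J.
  by have := neq_lift (Ordinal J'_lt) k; rewrite -val_eqE /=; lia.
rewrite /pl_minor -det_tr -[\det (\matrix_(i, j) eta _ _)]det_tr.
rewrite -[\det (\matrix_(i, j) zeta _ _)]det_tr.
apply: (determinant_multilinear (i0 := Ordinal J'_lt)).
- by apply/rowP => i; rewrite !mxE /= prednK.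
- by apply/matrixP => k i; rewrite !mxE; case: (off_J (part_m la i.+1) _ _ (lift_neq k)).
- by apply/matrixP => k i; rewrite !mxE; case: (off_J (part_m la i.+1) _ _ (lift_neq k)).
Qed.

Lemma pl_minor_swapn xi la M s :
  (0 < s < M)%N -> pl_minor (frame_perm xi (swapn s)) la M = - pl_minor xi la M.
Proof.
move=> /andP [s_gt0 s_lt].
have s1_lt : (s.-1 < M)%N by lia.
pose j1 := Ordinal s1_lt; pose j2 := Ordinal s_lt.
rewrite /pl_minor.
have -> : \matrix_(i < M, j < M) frame_perm xi (swapn s) (part_m la i.+1) j.+1
        = xcol j1 j2 (\matrix_(i < M, j < M) xi (part_m la i.+1) j.+1).
  apply/matrixP => i j; rewrite !mxE /frame_perm; congr (xi _ _).
  case: tpermP => [->|->| ne1 ne2]; rewrite /swapn /=; try by do ![case: ifP]; lia.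
  case: ifP => [/eqP E|_]; first by case: ne1; apply: val_inj => /=; lia.
  by case: ifP => [/eqP E|//]; case: ne2; apply: val_inj => /=; lia.
rewrite xcolE det_mulmx det_perm odd_tperm.
have -> : (j1 != j2) = true by rewrite -val_eqE /=; lia.
by rewrite expr1 mulrN1.
Qed.

Lemma pl_minor_rotn xi la M s : (0 < s <= M)%N ->
  pl_minor (frame_perm xi (rotn s)) la M = (-1) ^+ (s - 1) * pl_minor xi la M.
Proof.
elim: s => [|[|s] IH] /andP [s_gt0 s_le] //.
  rewrite mul1r; apply: pl_minor_ext => i j /andP [j_gt0 _].
  by rewrite /frame_perm; congr (xi _ _); rewrite /rotn; do ![case: ifP]; lia.
rewrite (@pl_minor_ext _ (frame_perm (frame_perm xi (rotn s.+1)) (swapn s.+1))); last first.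
  by move=> i j _; rewrite /frame_perm rotnS.
rewrite pl_minor_swapn ?IH; try lia.
by rewrite !subn1 /= exprS mulN1r mulNr.
Qed.

Lemma plucker_eventually xi la c :
  (exists M0, forall M, (M0 <= M)%N -> pl_minor xi la M = c) -> plucker xi la = c.
Proof.
move=> [M0 xiM0]; rewrite /plucker.
have [M1 xiM1] := epsilon_spec (inhabits (0 : C))
  (fun c => exists M0, forall M, (M0 <= M)%N -> pl_minor xi la M = c)
  (ex_intro _ c (ex_intro _ M0 xiM0)).
by rewrite -(xiM1 (maxn M0 M1)) ?leq_maxr // xiM0 // leq_maxl.
Qed.

Section Stable.
Variables (xi : frame C) (K : nat).
Hypothesis xi_below : forall (j : nat) (i : int), (0 < j)%N -> i < - j%:Z -> xi i j = 0.
Hypothesis xi_diag : forall j : nat, (K < j)%N -> xi (- j%:Z) j = 1.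

(* Once [M >= size la], row [M + 1] has index [- (M + 1)] and reads [(0, ..., 0, 1)]. *)
Lemma pl_minorS la M :
  (K <= M)%N -> (size la <= M)%N -> pl_minor xi la M.+1 = pl_minor xi la M.
Proof.
move=> K_le la_le.
have last_row : part_m la M.+1 = - M.+1%:Z by rewrite /part_m /= nth_default // sub0r.
rewrite /pl_minor (expand_det_row _ ord_max) big_ord_recr /= big1 ?add0r; last first.
  by move=> j _; rewrite !mxE /= last_row xi_below ?mul0r //; have := ltn_ord j; lia.
rewrite !mxE [nat_of_ord ord_max]/= last_row xi_diag ?mul1r; last lia.
rewrite /cofactor addnn -signr_odd odd_double expr0 mul1r.
by congr (\det _); apply/matrixP => i j; rewrite !mxE !lift_max.
Qed.

Lemma plucker_minor la M : (maxn K (size la) <= M)%N -> plucker xi la = pl_minor xi la M.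
Proof.
pose M0 := maxn K (size la).
have stable M' : (M0 <= M')%N -> pl_minor xi la M' = pl_minor xi la M0.
  elim: M' => [|M' IH]; first by rewrite leqn0 => /eqP ->.
  rewrite leq_eqVlt => /orP [/eqP -> //| lt_M0].
  by rewrite pl_minorS ?IH //; move: lt_M0; rewrite /M0 ltnS geq_max => /andP [].
by move=> le_M; rewrite stable //; apply: plucker_eventually; exists M0.
Qed.

End Stable.

End Minors.

Section SchurWeight.
Variables (C : numClosedFieldType) (N : nat).

Lemma mweight_mnmwgt (m : 'X_{1..N}) : Defs.mweight m = mnmwgt m.
Proof. by apply: eq_bigr => i _; rewrite mulnC. Qed.

Lemma dhomog_prod_ord n (d : 'I_n -> nat) (F : 'I_n -> {mpoly C[N]}) :
  (forall i, F i \is (d i).-homog for mnmwgt) ->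
  \prod_i F i \is (\sum_i d i)%N.-homog for mnmwgt.
Proof.
move=> homF; apply: (big_ind2 (fun p e => p \is e.-homog for mnmwgt)) => //.
- exact: dhomog1.
- by move=> p e q e' hp hq; exact: dhomogM.
Qed.

Lemma dhomog_schur1 (k : nat) : schur1 C N k \is k.-homog for mnmwgt.
Proof.
apply: rpred_sum => m /eqP wm; apply: rpredZ.
by rewrite dhomogX; apply/eqP; rewrite -[RHS]wm; apply/esym/mweight_mnmwgt.
Qed.

Lemma sum_schur_args {la : seq nat} (s : 'S_(size la)) :
  \sum_(i < size la) ((nth 0%N la i)%:Z - i%:Z + (s i : nat)%:Z) = (sumn la)%:Z.
Proof.
rewrite !big_split /= sumrN.
have -> : \sum_(i < size la) (s i : nat)%:Z = \sum_(i < size la) (i : nat)%:Z.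
  by rewrite [RHS](reindex_inj (@perm_inj _ s)).
rewrite subrK sumnE (big_nth 0%N) big_mkord.
by rewrite -(big_morph Posz PoszD (erefl _)).
Qed.

Lemma dhomog_schur (la : seq nat) : schur C N la \is (sumn la).-homog for mnmwgt.
Proof.
apply: rpred_sum => s _; rewrite mulr_sign.
pose arg (i : 'I_(size la)) : int := (nth 0%N la i)%:Z - i%:Z + (s i : nat)%:Z.
suff hom : \prod_i schur1 C N (arg i) \is (sumn la).-homog for mnmwgt.
  by under eq_bigr do rewrite mxE; case: (odd_perm s); rewrite ?rpredN.
have [i arg_lt0 | arg_ge0] := pickP (fun i => arg i < 0).
  by rewrite (bigD1 i) //=; case: (arg i) arg_lt0 => // k _; rewrite mul0r rpred0.
have -> : sumn la = (\sum_i `|arg i|%N)%N.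
  apply/eqP; rewrite -(eqr_nat int) !natz (big_morph Posz PoszD (erefl _)).
  rewrite -(sum_schur_args s); apply/eqP/eq_bigr => i _.
  by rewrite gez0_abs // leNgt arg_ge0.
apply: dhomog_prod_ord => i.
have : 0 <= arg i by rewrite leNgt arg_ge0.
by case: (arg i) => // k _; exact: dhomog_schur1.
Qed.

End SchurWeight.

Fixpoint bounded_seqs (n w : nat) : seq (seq nat) :=
  if n is n'.+1 then [::] :: [seq x :: s | x <- iota 0 w.+1, s <- bounded_seqs n' w]
  else [:: [::]].

Lemma mem_bounded_seqs n w s :
  (size s <= n)%N -> all (fun x => x <= w)%N s -> s \in bounded_seqs n w.
Proof.
elim: n s => [|n IH] [|x s] // s_le /andP [x_le s_bnd].
rewrite in_cons; apply/orP; right; apply: (allpairs_f (fun y t => y :: t)).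
  by rewrite mem_iota.
exact: IH.
Qed.

Lemma size_le_sumn (s : seq nat) : all (fun x => 0 < x)%N s -> (size s <= sumn s)%N.
Proof. by elim: s => //= x s IH /andP [x_gt0 /IH]; lia. Qed.

Lemma all_leq_sumn (s : seq nat) : all (fun x => x <= sumn s)%N s.
Proof. by elim: s => //= x s IH; rewrite leq_addr /=; apply: sub_all IH => y /=; lia. Qed.

Section Tau.
Variable C : numClosedFieldType.

Lemma fsumE (T : eqType) (f : T -> C) s :
  uniq s -> (forall x, f x != 0 -> x \in s) -> fsum f = \sum_(x <- s) f x.
Proof.
move=> s_uniq s_supp; rewrite /fsum.
have [s' [s'_uniq s'_supp ->]] := epsilon_spec (inhabits (0 : C))
  (fun c => exists s : seq T,
     [/\ uniq s, (forall x, f x != 0 -> x \in s) & c = \sum_(x <- s) f x])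
  (ex_intro _ _ (ex_intro _ s (And3 s_uniq s_supp (erefl _)))).
have drop0 r : \sum_(x <- r) f x = \sum_(x <- r | f x != 0) f x.
  by rewrite [RHS]big_mkcond; apply: eq_bigr => x _; case: eqP.
rewrite drop0 [RHS]drop0 -big_filter -[RHS]big_filter.
apply/perm_big/uniq_perm; rewrite ?filter_uniq // => x.
by rewrite !mem_filter; case: (boolP (f x != 0)) => //= fx; rewrite s_supp ?s'_supp.
Qed.

Lemma tau_support (xi : frame C) N (m : 'X_{1..N}) la :
  (if is_partition la then plucker xi la * (schur C N la)@_m else 0) != 0 ->
  la \in bounded_seqs (Defs.mweight m) (Defs.mweight m).
Proof.
case: ifP => [/andP [_ la_pos] | _]; last by rewrite eqxx.
have [<-|w_ne] := eqVneq (sumn la) (Defs.mweight m).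
  by move=> _; apply: mem_bounded_seqs; [exact: size_le_sumn | exact: all_leq_sumn].
rewrite (dhomog_nemf_coeff (dhomog_schur C N la)) ?mulr0 ?eqxx //.
by apply: contra_neq w_ne => <-; exact/esym/mweight_mnmwgt.
Qed.

Lemma tau_linear (xi eta zeta : frame C) N (m : 'X_{1..N}) c :
  (forall la, plucker xi la = c * (plucker eta la - plucker zeta la)) ->
  tau xi m = c * (tau eta m - tau zeta m).
Proof.
move=> xi_comb; pose S := undup (bounded_seqs (Defs.mweight m) (Defs.mweight m)).
rewrite /tau !(@fsumE _ _ S) ?undup_uniq // => [|la|la|la];
  rewrite ?mem_undup; try exact: tau_support.
rewrite -sumrB mulr_sumr; apply: eq_bigr => la _.
by case: ifP => _; rewrite ?xi_comb; ring.
Qed.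

End Tau.

Section Frames.
Variables (C : numClosedFieldType) (g : nat) (alphas : seq C) (alpha y0 : C).

Local Notation X := (frameX alphas alpha g).
Local Notation Y := (frameY alphas alpha y0 g).

Lemma tail_colE k : (g < k)%N ->
  tail_col alphas g k =
  Defs.lshift (1 - k%:Z) (if odd (k - g - 1) then F0 alphas else psX C 0).
Proof.
move=> lt_gk; rewrite /tail_col.
have := odd_double_half (k - g - 1); rewrite -mul2n.
by case: odd => /= k_eq; congr Defs.lshift; lia.
Qed.

Lemma frameY_below eps (j : nat) (i : int) : (0 < j)%N -> i < - j%:Z -> Y eps i j = 0.
Proof.
move=> j_gt0 i_lt; rewrite /frameY /frame_of_cols /colY.
case: ifP => [j_le|j_gt]; first by rewrite lshiftE ifN //; lia.
case: ifP => [/eqP j_g|j_neg]; first by rewrite lshiftE ifN //; lia.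
by rewrite tail_colE ?lshiftE ?ifN //; lia.
Qed.

Lemma frameY_diag eps (j : nat) : (g < j)%N -> Y eps (- j%:Z) j = 1.
Proof.
move=> lt_gj; rewrite /frameY /frame_of_cols /colY ifN ?ifN; try lia.
rewrite tail_colE // lshiftE [- _ + 1]addrC lexx subrr.
by case: odd; [exact: F0_0 | rewrite /psX].
Qed.

Hypothesis g_gt0 : (0 < g)%N.

Lemma colY_g_split n :
  colY alphas alpha y0 g true g n =
  colY alphas alpha y0 g false g n + 2 * y0 * colX alphas alpha g 1 n.
Proof.
rewrite /colY /colX; have -> : (g <= g - 1)%N = false by lia.
rewrite !eqxx /= !lshift_psmul_linear !lshift_psmulXl.
have -> : 1 - g%:Z + (2 * g - 1)%N%:Z = g%:Z by lia.
by ring.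
Qed.

Lemma frameX_rotn_off_g i (j : nat) :
  (0 < j)%N -> j != g -> frame_perm X (rotn g) i j = Y true i j.
Proof.
move=> j_gt0 j_neg; rewrite /frame_perm /frameX /frameY /frame_of_cols /rotn /colX /colY.
case: ltnP => [lt_jg|le_gj].
  by rewrite ifN ?ifT; try lia; congr Defs.lshift; lia.
by rewrite ifN ?ifN ?ifN ?ifN //; lia.
Qed.

Lemma pl_minor_frameX la M : (g <= M)%N -> y0 != 0 ->
  pl_minor X la M =
  (-1) ^+ (g - 1) * (2 * y0)^-1 * (pl_minor (Y true) la M - pl_minor (Y false) la M).
Proof.
move=> le_gM y0_neq0.
have two_y0_neq0 : 2 * y0 != 0 by rewrite mulf_neq0 // pnatr_eq0.
rewrite (@pl_minor_linear _ (Y true) (Y false) (frame_perm X (rotn g)) la M g 1 (2 * y0)).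
- rewrite pl_minor_rotn ?g_gt0 // mul1r addrC addKr.
  set s := (-1) ^+ _; have ss : s * s = 1 by rewrite -expr2 sqrr_sign.
  by rewrite mulrA -[s * _ * _]mulrA mulVf // mulr1 mulrA ss mul1r.
- by rewrite g_gt0.
- by move=> i; rewrite mul1r /frameY /frame_of_cols colY_g_split /frame_perm /rotn ltnn eqxx.
- move=> i j j_gt0 j_neg; rewrite frameX_rotn_off_g //.
  by rewrite /frameY /frame_of_cols /colY (negbTE j_neg).
Qed.

End Frames.

Lemma prod_subr_neq0 (F : idomainType) (x : F) (s : seq F) :
  x \notin s -> \prod_(a <- s) (x - a) != 0.
Proof.
move=> x_notin; rewrite prodf_seq_neq0; apply/allPn => -[a a_in /=].
by rewrite negbK subr_eq0 => /eqP x_eq; rewrite x_eq a_in in x_notin.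
Qed.

Theorem theorem2 (C : numClosedFieldType) (g : nat) (alphas : seq C) (alpha y0 : C) :
  (2 <= g)%N ->
  size alphas = (2 * g - 1)%N ->
  uniq (alpha :: alphas) ->
  y0 ^+ 2 = \prod_(a <- alphas) (alpha - a) ->
  forall (N : nat) (m : 'X_{1..N}),
    tau (frameX alphas alpha g) m =
    (-1) ^+ (g - 1) * (2 * y0)^-1 *
      (tau (frameY alphas alpha y0 g true) m - tau (frameY alphas alpha y0 g false) m).
Proof.
move=> g_ge2 _ /andP [alpha_notin _] y0_sq N m.
have y0_neq0 : y0 != 0.
  apply: contraTneq (prod_subr_neq0 alpha_notin) => y0_eq0.
  by rewrite -y0_sq y0_eq0 expr0n negbK.
apply: tau_linear => la; apply: plucker_eventually.
exists (maxn g (size la)) => M le_M.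
rewrite !(plucker_minor (@frameY_below _ _ _ _ _ _) (@frameY_diag _ _ _ _ _ _) le_M).
by apply: pl_minor_frameX => //; [exact: ltnW | exact: leq_trans (leq_maxl _ _) le_M].
Qed.
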